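(* Let $v_1,\dots,v_n\in\mathbb{R}^k$ span $\mathbb{R}^k$ and satisfy the $1/2$-sandwich condition. Then there is a centered ellipsoid passing through $v_1,\dots,v_n$, i.e. there is a symmetric positive semidefinite $k\times k$ matrix $M$ with $v_i^TMv_i=1$ for all $i$.
   Context: For $v_1,\dots,v_n\in\mathbb{R}^k$ with $S=\sum_{j=1}^n v_jv_j^T$ invertible and $0<\beta<1$, let $\mathcal{E}_\beta(v_1,\dots,v_n)=\{x\in\mathbb{R}^k: x^TS^{-1}x\le\beta\}$ and $\mathcal{E}_1(v_1,\dots,v_n)=\{x: x^TS^{-1}x\le 1\}$. The points satisfy the $\beta$-sandwich condition if $\{v_1,\dots,v_n\}\subseteq\mathcal{E}_1(v_1,\dots,v_n)\setminus\mathcal{E}_\beta(v_1,\dots,v_n)$. A centered ellipsoid is described by a positive semidefinite matrix $M$ and passes through $v$ if $v^TMv=1$. *)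

From HB Require Import structures.
From mathcomp Require Import all_boot all_order all_algebra.
Set Implicit Arguments. Unset Strict Implicit. Unset Printing Implicit Defensive.
Import Order.TTheory GRing.Theory Num.Theory.
Local Open Scope ring_scope.

Definition pts_mx (R : ringType) (k n : nat) (v : 'I_n -> 'cV[R]_k) : 'M[R]_(k, n) :=
  \matrix_(i < k, j < n) v j i ord0.

Definition scatter (R : ringType) (k n : nat) (v : 'I_n -> 'cV[R]_k) : 'M[R]_k :=
  \sum_(j < n) (v j *m (v j)^T).

Definition qform (R : ringType) (k : nat) (A : 'M[R]_k) (x : 'cV[R]_k) : R :=
  ((x^T *m A *m x) ord0 ord0).

Definition spans (R : fieldType) (k n : nat) (v : 'I_n -> 'cV[R]_k) : Prop :=
  \rank (pts_mx v) = k.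

(* E_beta(v) = { x | x^T S^{-1} x <= beta } (S invertible assumed separately) *)
Definition in_ellE (R : numFieldType) (k n : nat) (v : 'I_n -> 'cV[R]_k) (beta : R)
  (x : 'cV[R]_k) : Prop :=
  qform (invmx (scatter v)) x <= beta.

Definition sandwich (R : numFieldType) (k n : nat) (beta : R) (v : 'I_n -> 'cV[R]_k) : Prop :=
  scatter v \in unitmx /\
  forall j, in_ellE v 1 (v j) /\ ~ in_ellE v beta (v j).

Definition psd (R : numDomainType) (k : nat) (M : 'M[R]_k) : Prop :=
  M^T = M /\ forall x : 'cV[R]_k, 0 <= qform M x.

(* Let S = V V^T, where V has columns v_j, and P = V^T S^-1 V. P is a symmetric
   projection, so the entries G_ji = P_ji^2 of its Hadamard square have row sums
   P_jj, and the sandwich condition says P_jj > 1/2. Hence G is strictly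
   diagonally dominant, so G c = 1 has a solution c, and comparing the equations
   at the minimum and the maximum of c shows c >= 0. Then
   M = S^-1 V diag(c) V^T S^-1 is positive semidefinite with
   v_j^T M v_j = sum_i c_i P_ji^2 = 1. *)
From HB Require Import structures.
From mathcomp Require Import all_boot all_order all_algebra.
From mathcomp Require Import reals.
From mathcomp Require Import lra.
Import Order.TTheory GRing.Theory Num.Theory.
Local Open Scope ring_scope.

Lemma qform_mulmx_tr (R : comNzRingType) (k m : nat) (W : 'M[R]_(k, m))
    (A : 'M[R]_m) (x : 'cV[R]_k) :
  qform (W *m A *m W^T) x = qform A (W^T *m x).
Proof. by rewrite /qform trmx_mul trmxK !mulmxA. Qed.

Lemma trmx_mulmx_tr_sym (R : comNzRingType) (k m : nat) (W : 'M[R]_(k, m))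
    (A : 'M[R]_m) :
  A^T = A -> (W *m A *m W^T)^T = W *m A *m W^T.
Proof. by move=> A_sym; rewrite !trmx_mul trmxK A_sym mulmxA. Qed.

Lemma qform_diag_mx (R : comNzRingType) (n : nat) (d : 'rV[R]_n) (y : 'cV[R]_n) :
  qform (diag_mx d) y = \sum_i d 0 i * y i 0 ^+ 2.
Proof.
rewrite /qform mul_mx_diag mxE; apply: eq_bigr => i _.
by rewrite !mxE mulrAC mulrC expr2.
Qed.

Lemma scatter_pts_mx (R : nzRingType) (k n : nat) (v : 'I_n -> 'cV[R]_k) :
  scatter v = pts_mx v *m (pts_mx v)^T.
Proof.
apply/matrixP => a b; rewrite summxE mxE; apply: eq_bigr => j _.
by rewrite !mxE big_ord1 !mxE.
Qed.

Lemma col_pts_mx (R : nzRingType) (k n : nat) (v : 'I_n -> 'cV[R]_k) (j : 'I_n) :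
  col j (pts_mx v) = v j.
Proof. by apply/colP => i; rewrite !mxE [ord0]ord1. Qed.

Lemma col_diag_dominant_unitmx (R : realFieldType) (n : nat) (A : 'M[R]_n) :
  (forall j, \sum_(i | i != j) `|A i j| < `|A j j|) -> A \in unitmx.
Proof.
move=> dominant; rewrite -row_free_unit; apply: inj_row_free => x xA0.
apply/rowP => i0; rewrite mxE; apply/normr0_eq0.
have [m _ x_max] := @arg_maxP _ R _ i0 xpredT (fun i => `|x 0 i|) isT.
suff xm0 : `|x 0 m| = 0.
  by apply/eqP; rewrite eq_le normr_ge0 andbT -xm0; exact: x_max.
have /eqP := congr1 (fun B : 'rV_n => B 0 m) xA0.
rewrite !mxE (bigD1 m) //= addr_eq0 => /eqP xmAmm.
have off_bound : `|x 0 m| * `|A m m| <= `|x 0 m| * \sum_(i | i != m) `|A i m|.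
  rewrite -normrM xmAmm normrN mulr_sumr.
  apply: le_trans (ler_norm_sum _ _ _) _; apply: ler_sum => i _.
  by rewrite normrM; apply: ler_wpM2r; [exact: normr_ge0 | exact: x_max].
apply/eqP; rewrite eq_le normr_ge0 andbT leNgt; apply/negP => xm_pos.
by move: off_bound; rewrite ler_pM2l // leNgt dominant.
Qed.

(* Scaling the two inequalities by t - t^2 and s^2 eliminates b and leaves
   s^2 - (t - t^2) <= a s t (s t - (1 - s) (1 - t)), whose sides have opposite signs. *)
Lemma min_max_weight_bound {R : realFieldType} {a b t s : R} :
  1/2 < t -> t <= 1 -> 1/2 < s -> s <= 1 -> a < 0 ->
  s^+2 * b + (s - s^+2) * a <= 1 -> t^+2 * a + (t - t^+2) * b < 1.
Proof.
move=> t_gt t_le s_gt s_le a_neg h_s; rewrite ltNge; apply/negP => h_t.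
have tt_ge0 : 0 <= t - t^+2 by nra.
have scaled_t : s^+2 * (1 - t^+2 * a) <= s^+2 * ((t - t^+2) * b).
  by apply: ler_wpM2l; [nra | lra].
have scaled_s : (t - t^+2) * (s^+2 * b) <= (t - t^+2) * (1 - (s - s^+2) * a).
  by apply: ler_wpM2l => //; lra.
have coef_pos : 0 < s * t * (s * t - (1 - t) * (1 - s)) by apply: mulr_gt0; nra.
have : a * (s * t * (s * t - (1 - t) * (1 - s))) < 0 by nra.
nra.
Qed.

Definition hadamard_sq {R : pzSemiRingType} {n : nat} (P : 'M[R]_n) : 'M[R]_n :=
  map_mx (fun x => x ^+ 2) P.

Lemma hadamard_sqE (R : pzSemiRingType) (n : nat) (P : 'M[R]_n) i j :
  hadamard_sq P i j = P i j ^+ 2.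
Proof. by rewrite mxE. Qed.

Section HadamardSquareOfProjection.
Context {R : realFieldType} {n : nat} {P : 'M[R]_n}.
Hypotheses (P_sym : P^T = P) (P_idem : P *m P = P).
Hypothesis P_diag_gt : forall j, 1/2 < P j j.

Let G := hadamard_sq P.

Lemma proj_entryC i j : P i j = P j i.
Proof. by rewrite -{1}P_sym mxE. Qed.

Lemma proj_row_sum_sq j : \sum_i P j i ^+ 2 = P j j.
Proof.
rewrite -{2}P_idem mxE; apply: eq_bigr => i _.
by rewrite (proj_entryC i j) expr2.
Qed.

Lemma proj_offdiag_sum_sq j : \sum_(i | i != j) P j i ^+ 2 = P j j - P j j ^+ 2.
Proof.
have := proj_row_sum_sq j; rewrite (bigD1 j) //= => row_sum.
by rewrite -{1}row_sum addrAC subrr add0r.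
Qed.

Lemma proj_diag_le1 j : P j j <= 1.
Proof.
have := proj_offdiag_sum_sq j; have := P_diag_gt j.
have : 0 <= \sum_(i | i != j) P j i ^+ 2 by apply: sumr_ge0 => i _; exact: sqr_ge0.
nra.
Qed.

Lemma hadamard_sq_unitmx : G \in unitmx.
Proof.
apply: col_diag_dominant_unitmx => j.
under eq_bigr => i _ do rewrite mxE ger0_norm ?sqr_ge0 // proj_entryC.
rewrite proj_offdiag_sum_sq mxE ger0_norm ?sqr_ge0 //.
by have := P_diag_gt j; nra.
Qed.

Lemma hadamard_sq_solution_ge0 (c : 'cV[R]_n) :
  G *m c = const_mx 1 -> forall i, 0 <= c i 0.
Proof.
move=> Gc1 i0; pose w i := c i 0.
have [j _ w_min] := @arg_minP _ R _ i0 xpredT w isT.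
have [l _ w_max] := @arg_maxP _ R _ i0 xpredT w isT.
apply: le_trans (w_min i0 isT); rewrite leNgt; apply/negP => wj_neg.
have row_eq m : P m m ^+ 2 * w m + \sum_(i | i != m) P m i ^+ 2 * w i = 1.
  have := congr1 (fun B : 'cV_n => B m 0) Gc1; rewrite !mxE (bigD1 m) //=.
  by under eq_bigr => i _ do rewrite hadamard_sqE; rewrite hadamard_sqE.
have off_bounds m : (P m m - P m m ^+ 2) * w j <= \sum_(i | i != m) P m i ^+ 2 * w i
    <= (P m m - P m m ^+ 2) * w l.
  rewrite -proj_offdiag_sum_sq !mulr_suml; apply/andP.
  by split; apply: ler_sum => i _; apply: (ler_wpM2l (sqr_ge0 _));
    first [exact: w_min | exact: w_max].
have /(min_max_weight_bound (P_diag_gt j) (proj_diag_le1 j) (P_diag_gt l)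
    (proj_diag_le1 l) wj_neg) : P l l ^+ 2 * w l + (P l l - P l l ^+ 2) * w j <= 1.
  by rewrite -(row_eq l) lerD2l; case/andP: (off_bounds l).
by rewrite -(row_eq j) ltrD2l ltNge; case/andP: (off_bounds j) => _ ->.
Qed.

Lemma hadamard_sq_nonneg_solution :
  exists2 c : 'cV[R]_n, G *m c = const_mx 1 & forall i, 0 <= c i 0.
Proof.
have Gc1 : G *m (invmx G *m const_mx 1) = const_mx 1 :> 'cV[R]_n.
  by rewrite mulmxA mulmxV ?hadamard_sq_unitmx // mul1mx.
by exists (invmx G *m const_mx 1); last exact: hadamard_sq_solution_ge0.
Qed.

End HadamardSquareOfProjection.

Section SandwichEllipsoid.
Context {R : realFieldType} {k n : nat} (v : 'I_n -> 'cV[R]_k).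
Hypothesis S_unit : scatter v \in unitmx.

Let V := pts_mx v.
Let Si := invmx (scatter v).
Let P := V^T *m Si *m V.

Lemma invmx_scatter_sym : Si^T = Si.
Proof. by rewrite /Si trmx_inv scatter_pts_mx trmx_mul trmxK. Qed.

Lemma leverage_sym : P^T = P.
Proof. by rewrite /P !trmx_mul trmxK invmx_scatter_sym mulmxA. Qed.

Lemma leverage_idem : P *m P = P.
Proof.
by rewrite /P !mulmxA -(mulmxA (V^T *m Si) V) -scatter_pts_mx mulmxKV.
Qed.

Lemma leverage_col j : col j P = V^T *m Si *m v j.
Proof. by rewrite /P colE -mulmxA -colE /V col_pts_mx. Qed.

Lemma leverage_diag j : P j j = qform Si (v j).
Proof.
have /(congr1 (fun x : 'cV_n => x j 0)) := leverage_col j.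
rewrite !mxE => ->; rewrite /qform mxE; apply: eq_bigr => i _.
by rewrite !mxE; congr (_ * _); apply: eq_bigr => l _; rewrite !mxE.
Qed.

Lemma sandwich_ellipsoid (c : 'cV[R]_n) :
  hadamard_sq P *m c = const_mx 1 -> (forall i, 0 <= c i 0) ->
  let M := (Si *m V) *m diag_mx c^T *m (Si *m V)^T in
  psd M /\ forall j, qform M (v j) = 1.
Proof.
move=> Gc1 c_ge0 M; split; first split.
- exact/trmx_mulmx_tr_sym/tr_diag_mx.
- move=> x; rewrite qform_mulmx_tr qform_diag_mx; apply: sumr_ge0 => i _.
  by rewrite mxE mulr_ge0 ?sqr_ge0.
move=> j; rewrite qform_mulmx_tr trmx_mul invmx_scatter_sym -leverage_col.
have /(congr1 (fun x : 'cV_n => x j 0)) := Gc1.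
rewrite qform_diag_mx mxE [RHS]mxE => <-; apply: eq_bigr => i _.
rewrite hadamard_sqE [c^T _ _]mxE [col j P i 0]mxE.
by rewrite (proj_entryC leverage_sym i j) mulrC.
Qed.

End SandwichEllipsoid.

Theorem corollary4p4 (R : realType) (k n : nat) (v : 'I_n -> 'cV[R]_k) :
  spans v -> sandwich (1 / 2) v ->
  exists M : 'M[R]_k, psd M /\ forall j : 'I_n, qform M (v j) = 1.
Proof.
move=> _ [S_unit in_shell].
pose P := (pts_mx v)^T *m invmx (scatter v) *m pts_mx v.
have P_diag_gt (j : 'I_n) : 1/2 < P j j.
  by rewrite leverage_diag ltNge; apply/negP; case: (in_shell j).
have [c Gc1 c_ge0] :=
  hadamard_sq_nonneg_solution (leverage_sym v) (leverage_idem v S_unit) P_diag_gt.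
by eexists; exact: sandwich_ellipsoid Gc1 c_ge0.
Qed.
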